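(* Let $0<b<a$, $c=\sqrt{a^2-b^2}$, and let $h>0$ be defined by $\sinh(h/2)=c/b$ (equivalently $\cosh(h/2)=a/b$, $\tanh(h/2)=c/a$). For $\lambda\in(0,b)$ let the modulus $k\in(0,1)$ be given by $k^2=(a^2-b^2)/(a^2-\lambda^2)$, let $K=K(k)$, $K'=K(\sqrt{1-k^2})$, let $\delta\in(0,2K)$ be given by $\operatorname{sn}(\delta/2,k)=\lambda/b$, and set $\zeta=2K-\delta\in(0,2K)$. Let $\tilde q_0(t)=(a\operatorname{sn}(t,k),\,b\operatorname{cn}(t,k))$ and $\hat q_0(s)=(a\tanh s,\,b\operatorname{sech} s)$. Then \[\lim_{\lambda\to b^-}k=1,\quad \lim_{\lambda\to b^-}K=+\infty,\quad \lim_{\lambda\to b^-}K'=\pi/2,\quad \lim_{\lambda\to b^-}\zeta=h,\] and moreover \[\lim_{\lambda\to b^-}\tilde q_0(t)=\hat q_0(t),\qquad \lim_{\lambda\to b^-}\tilde q_0(t\pm\delta)=-\hat q_0(t\mp h),\] where both limits are uniform on compact subsets of $\mathbb{R}$, but not uniform on $\mathbb{R}$.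
   Context: $K(k)=\int_0^{\pi/2}(1-k^2\sin^2\phi)^{-1/2}\,d\phi$ is the complete elliptic integral of the first kind. The amplitude $\varphi=\operatorname{am}(t,k)$ is defined by $t=\int_0^\varphi(1-k^2\sin^2\phi)^{-1/2}d\phi$, and $\operatorname{sn}(t,k)=\sin\varphi$, $\operatorname{cn}(t,k)=\cos\varphi$ are the Jacobian elliptic sine and cosine. *)

From Stdlib Require Import Reals Lra ClassicalEpsilon.
From Coquelicot Require Import Coquelicot.
Open Scope R_scope.

Definition ellF (k phi : R) : R :=
  RInt (fun x => / sqrt (1 - k ^ 2 * sin x ^ 2)) 0 phi.

Definition ellK (k : R) : R := ellF k (PI / 2).

(* Jacobi amplitude: the phi with F(phi,k) = t (unique for 0 <= k < 1) *)
Definition am (t k : R) : R :=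
  epsilon (inhabits 0) (fun phi => ellF k phi = t).

Definition sn (t k : R) : R := sin (am t k).
Definition cn (t k : R) : R := cos (am t k).

Definition sech (s : R) : R := / cosh s.

Definition kmod (a b lam : R) : R := sqrt ((a ^ 2 - b ^ 2) / (a ^ 2 - lam ^ 2)).
Definition Kl (a b lam : R) : R := ellK (kmod a b lam).
Definition Kpl (a b lam : R) : R := ellK (sqrt (1 - kmod a b lam ^ 2)).
Definition deltal (a b lam : R) : R :=
  epsilon (inhabits 0)
    (fun d => 0 < d < 2 * Kl a b lam /\ sn (d / 2) (kmod a b lam) = lam / b).
Definition zetal (a b lam : R) : R := 2 * Kl a b lam - deltal a b lam.

Definition qt1 (a b lam t : R) : R := a * sn t (kmod a b lam).
Definition qt2 (a b lam t : R) : R := b * cn t (kmod a b lam).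
Definition qh1 (a b s : R) : R := a * tanh s.
Definition qh2 (a b s : R) : R := b * sech s.

Definition unif_compact (b : R) (f : R -> R -> R * R) (g : R -> R * R) : Prop :=
  forall M eps : R, 0 < eps ->
    at_left b (fun lam => forall t, Rabs t <= M ->
      Rabs (fst (f lam t) - fst (g t)) < eps /\ Rabs (snd (f lam t) - snd (g t)) < eps).

Definition unif_R (b : R) (f : R -> R -> R * R) (g : R -> R * R) : Prop :=
  forall eps : R, 0 < eps ->
    at_left b (fun lam => forall t,
      Rabs (fst (f lam t) - fst (g t)) < eps /\ Rabs (snd (f lam t) - snd (g t)) < eps).

From Stdlib Require Import Reals Lra ClassicalEpsilon.
From Coquelicot Require Import Coquelicot.
Open Scope R_scope.

(* As k -> 1 the integrand of F(., k) tends to 1/cos, and F(gd s, 1) = s for the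
   Gudermannian gd = atan o sinh; quantitatively |F(gd s, k) - s| <= |s| (1 - k^2) e^(2|s|).
   Since F(., k) expands distances, am(., k) -> gd uniformly on compact sets, so
   (sn, cn) -> (sin gd, cos gd) = (tanh, sech); the same bound gives K(k) -> +oo, and
   K(k') -> PI/2 because the integrand for k' tends to 1.  For the shifted curves,
   am(t +- 2K) = am(t) +- PI reduces t +- delta to t -+ zeta, and the complementary-argument
   identity F(atan(cot x / k'), k) + F(x, k) = K gives zeta = 2 F(gd s, k) with
   sinh s = sqrt(a^2 - lam^2) / lam -> sinh(h/2).  Uniformity on R fails because the second
   component of each limit has a fixed sign, while cn(., k) takes the values 1 and -1 at
   points depending on lam. *)

Lemma MVT_R (f df : R -> R) (x y : R) :
  (forall z, is_derive f z (df z)) ->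
  exists c, Rmin x y <= c <= Rmax x y /\ f y - f x = df c * (y - x).
Proof.
  intros Hf; apply (MVT_gen f x y df); intros z _; [apply Hf|].
  apply continuity_pt_filterlim, (ex_derive_continuous (V := R_NormedModule)).
  eexists; apply Hf.
Qed.

Lemma lipschitz_of_derive_bound (f df : R -> R) (L x y : R) :
  (forall z, is_derive f z (df z)) -> (forall z, Rabs (df z) <= L) ->
  Rabs (f y - f x) <= L * Rabs (y - x).
Proof.
  intros Hf Hdf; destruct (MVT_R f df x y Hf) as [c [_ ->]].
  rewrite Rabs_mult; apply Rmult_le_compat_r; [apply Rabs_pos | apply Hdf].
Qed.

Lemma sin_lipschitz (x y : R) : Rabs (sin y - sin x) <= Rabs (y - x).
Proof.
  rewrite <- (Rmult_1_l (Rabs (y - x))); apply (lipschitz_of_derive_bound sin cos).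
  - intro z; auto_derive; auto; ring.
  - intro z; apply Rabs_le; pose proof (COS_bound z); lra.
Qed.

Lemma cos_lipschitz (x y : R) : Rabs (cos y - cos x) <= Rabs (y - x).
Proof.
  rewrite <- (Rmult_1_l (Rabs (y - x))).
  apply (lipschitz_of_derive_bound cos (fun z => - sin z)).
  - intro z; auto_derive; auto; ring.
  - intro z; apply Rabs_le; pose proof (SIN_bound z); lra.
Qed.

Lemma continuous_at_left (f : R -> R) (x : R) :
  continuous f x -> filterlim f (at_left x) (locally (f x)).
Proof.
  intros Hf; apply (filterlim_filter_le_1 _ (G := at_left x) (F := locally x)); [|exact Hf].
  intros P HP; exact (filter_imp _ _ (fun y Py _ => Py) HP).
Qed.

Lemma filterlim_locally_Rabs {T : Type} (F : (T -> Prop) -> Prop) {FF : Filter F}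
    (f : T -> R) (l : R) :
  filterlim f F (locally l) -> forall eps, 0 < eps -> F (fun x => Rabs (f x - l) < eps).
Proof. intros Hf eps He; exact (proj1 (filterlim_locally f l) Hf (mkposreal eps He)). Qed.

Lemma filterlim_of_dominated {T : Type} (F : (T -> Prop) -> Prop) {FF : Filter F}
    (f g : T -> R) (l C : R) :
  F (fun x => Rabs (f x - l) <= C * Rabs (g x)) -> filterlim g F (locally 0) ->
  filterlim f F (locally l).
Proof.
  intros Hfg Hg; apply filterlim_locally; intros eps.
  assert (HC : 0 < Rabs C + 1) by (pose proof (Rabs_pos C); lra).
  assert (He : 0 < eps / (Rabs C + 1)) by (apply Rdiv_lt_0_compat; [apply cond_pos | lra]).
  generalize (filter_and _ _ Hfg (filterlim_locally_Rabs F g 0 Hg _ He)).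
  apply filter_imp; intros x [Hx Hgx]; rewrite Rminus_0_r in Hgx.
  change (Rabs (f x - l) < eps).
  assert (C * Rabs (g x) <= Rabs C * Rabs (g x))
    by (apply Rmult_le_compat_r; [apply Rabs_pos | apply Rle_abs]).
  apply (Rmult_lt_compat_l (Rabs C + 1)) in Hgx; [|lra].
  replace ((Rabs C + 1) * (eps / (Rabs C + 1))) with (pos eps) in Hgx by (field; lra).
  pose proof (Rabs_pos (g x)); nra.
Qed.

Lemma cosh_sq (x : R) : cosh x ^ 2 = 1 + sinh x ^ 2.
Proof.
  unfold cosh, sinh.
  assert (exp x * exp (- x) = 1) by (rewrite <- exp_plus, Rplus_opp_r; apply exp_0).
  nra.
Qed.

Lemma cosh_ge_1 (x : R) : 1 <= cosh x.
Proof.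
  assert (0 < cosh x) by (unfold cosh; pose proof (exp_pos x); pose proof (exp_pos (- x)); lra).
  pose proof (cosh_sq x); pose proof (pow2_ge_0 (sinh x)); nra.
Qed.

Lemma sech_pos (x : R) : 0 < sech x.
Proof. apply Rinv_0_lt_compat; pose proof (cosh_ge_1 x); lra. Qed.

Lemma sech_le_1 (x : R) : sech x <= 1.
Proof. rewrite <- Rinv_1; apply Rinv_le_contravar; [lra | apply cosh_ge_1]. Qed.

Lemma sqrt_1_plus_sinh_sq (x : R) : sqrt (1 + (sinh x)²) = cosh x.
Proof.
  unfold Rsqr; replace (1 + sinh x * sinh x) with (cosh x ^ 2) by (rewrite cosh_sq; ring).
  apply sqrt_pow2; pose proof (cosh_ge_1 x); lra.
Qed.

Lemma exp_le_exp (x y : R) : x <= y -> exp x <= exp y.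
Proof.
  intros [Hxy | ->]; [apply Rlt_le, exp_increasing, Hxy | apply Rle_refl].
Qed.

Lemma Rabs_sinh_le_exp (x : R) : Rabs (sinh x) <= exp (Rabs x).
Proof.
  unfold sinh; pose proof (exp_pos x); pose proof (exp_pos (- x)).
  assert (exp x <= exp (Rabs x)) by (apply exp_le_exp, Rle_abs).
  assert (exp (- x) <= exp (Rabs x)) by (rewrite <- Rabs_Ropp; apply exp_le_exp, Rle_abs).
  apply Rabs_le; lra.
Qed.

Definition gd (s : R) : R := atan (sinh s).

Lemma sin_gd (s : R) : sin (gd s) = tanh s.
Proof. unfold gd, tanh; rewrite sin_atan, sqrt_1_plus_sinh_sq; reflexivity. Qed.

Lemma cos_gd (s : R) : cos (gd s) = sech s.
Proof. unfold gd, sech; rewrite cos_atan, sqrt_1_plus_sinh_sq; unfold Rdiv; ring. Qed.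

Lemma is_derive_gd (s : R) : is_derive gd s (sech s).
Proof.
  apply is_derive_Reals; unfold gd, sech.
  replace (/ cosh s) with (/ (1 + sinh s ^ 2) * cosh s)
    by (rewrite <- cosh_sq; pose proof (cosh_ge_1 s); field; lra).
  apply (derivable_pt_lim_comp sinh atan s (cosh s));
    [apply derivable_pt_lim_sinh | apply derivable_pt_lim_atan].
Qed.

Lemma gd_lipschitz (x y : R) : Rabs (gd y - gd x) <= Rabs (y - x).
Proof.
  rewrite <- (Rmult_1_l (Rabs (y - x))); apply (lipschitz_of_derive_bound gd sech).
  - exact is_derive_gd.
  - intro z; rewrite Rabs_pos_eq; [apply sech_le_1 | apply Rlt_le, sech_pos].
Qed.

Definition ellF_integrand (k x : R) : R := / sqrt (1 - k ^ 2 * sin x ^ 2).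

Lemma ellF_0 (k : R) : ellF k 0 = 0.
Proof. exact (RInt_point (V := R_CompleteNormedModule) 0 _). Qed.

Lemma Rabs_inv_sqrt_1_plus_sub_1 (u : R) : 0 <= u -> Rabs (/ sqrt (1 + u) - 1) <= u.
Proof.
  intros Hu.
  assert (Hr : 1 <= sqrt (1 + u)) by (rewrite <- sqrt_1 at 1; apply sqrt_le_1_alt; lra).
  assert (sqrt (1 + u) * sqrt (1 + u) = 1 + u) by (apply sqrt_sqrt; lra).
  assert (sqrt (1 + u) * / sqrt (1 + u) = 1) by (field; lra).
  assert (0 < / sqrt (1 + u)) by (apply Rinv_0_lt_compat; lra).
  rewrite Rabs_left1; nra.
Qed.

Definition ellF_gd_err (k s : R) : R := Rabs s * ((1 - k ^ 2) * exp (Rabs s) ^ 2).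

Section EllipticF.

Variable k : R.
Hypothesis hk : k ^ 2 < 1.

Lemma ellF_integrand_radicand_pos (x : R) : 0 < 1 - k ^ 2 * sin x ^ 2.
Proof.
  assert (0 <= sin x ^ 2 <= 1) by (pose proof (SIN_bound x); nra).
  pose proof (pow2_ge_0 k); nra.
Qed.

Lemma one_le_ellF_integrand (x : R) : 1 <= ellF_integrand k x.
Proof.
  unfold ellF_integrand; pose proof (ellF_integrand_radicand_pos x).
  assert (0 <= k ^ 2 * sin x ^ 2) by (apply Rmult_le_pos; apply pow2_ge_0).
  apply Rle_trans with (/ sqrt 1); [rewrite sqrt_1, Rinv_1; lra|].
  apply Rinv_le_contravar; [now apply sqrt_lt_R0 | apply sqrt_le_1_alt; lra].
Qed.

Lemma ellF_integrand_le (x : R) : ellF_integrand k x <= / sqrt (1 - k ^ 2).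
Proof.
  unfold ellF_integrand; apply Rinv_le_contravar; [apply sqrt_lt_R0; lra|].
  apply sqrt_le_1_alt.
  assert (sin x ^ 2 <= 1) by (pose proof (SIN_bound x); nra).
  pose proof (pow2_ge_0 k); nra.
Qed.

Lemma continuous_ellF_integrand (x : R) : continuous (ellF_integrand k) x.
Proof.
  apply (ex_derive_continuous (V := R_NormedModule)); unfold ellF_integrand; auto_derive.
  pose proof (ellF_integrand_radicand_pos x) as H; simpl in H.
  repeat split; [lra | apply Rgt_not_eq, sqrt_lt_R0; lra].
Qed.

Lemma is_derive_ellF (x : R) : is_derive (ellF k) x (ellF_integrand k x).
Proof.
  apply (is_derive_RInt (ellF_integrand k) _ 0); [|apply continuous_ellF_integrand].
  apply filter_forall; intros y.
  apply (RInt_correct (V := R_CompleteNormedModule)),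
        (ex_RInt_continuous (V := R_CompleteNormedModule)).
  intros z _; apply continuous_ellF_integrand.
Qed.

Lemma continuous_ellF : continuity (ellF k).
Proof.
  intro z; apply continuity_pt_filterlim, (ex_derive_continuous (V := R_NormedModule)).
  eexists; apply is_derive_ellF.
Qed.

Lemma ellF_sub_ge (x y : R) : x <= y -> y - x <= ellF k y - ellF k x.
Proof.
  intros Hxy; destruct (MVT_R (ellF k) (ellF_integrand k) x y is_derive_ellF) as [c [_ ->]].
  pose proof (one_le_ellF_integrand c); nra.
Qed.

Lemma Rabs_sub_le_ellF (x y : R) : Rabs (y - x) <= Rabs (ellF k y - ellF k x).
Proof.
  destruct (Rle_dec x y) as [H | H].
  - pose proof (ellF_sub_ge x y H); rewrite !Rabs_pos_eq; lra.
  - pose proof (ellF_sub_ge y x ltac:(lra)).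
    rewrite (Rabs_minus_sym y), (Rabs_minus_sym (ellF k y)), !Rabs_pos_eq; lra.
Qed.

Lemma ellF_inj (x y : R) : ellF k x = ellF k y -> x = y.
Proof.
  intros E; pose proof (Rabs_sub_le_ellF x y) as H.
  rewrite E, Rminus_diag, Rabs_R0 in H; pose proof (Rabs_pos (y - x)).
  assert (Rabs (y - x) = 0) as Hxy by lra; apply Rabs_eq_0 in Hxy; lra.
Qed.

Lemma ellF_surj (t : R) : exists phi, ellF k phi = t.
Proof.
  assert (Hbetween : Rmin (ellF k 0) (ellF k t) <= t <= Rmax (ellF k 0) (ellF k t)).
  { destruct (Rle_dec 0 t) as [H | H].
    - pose proof (ellF_sub_ge 0 t H); rewrite ellF_0 in *.
      unfold Rmin, Rmax; destruct Rle_dec; lra.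
    - pose proof (ellF_sub_ge t 0 ltac:(lra)); rewrite ellF_0 in *.
      unfold Rmin, Rmax; destruct Rle_dec; lra. }
  destruct (IVT_gen (ellF k) 0 t t continuous_ellF Hbetween) as [x [_ Hx]].
  exists x; exact Hx.
Qed.

Lemma ellF_am (t : R) : ellF k (am t k) = t.
Proof. unfold am; apply epsilon_spec, ellF_surj. Qed.

Lemma am_ellF (phi : R) : am (ellF k phi) k = phi.
Proof. apply ellF_inj, ellF_am. Qed.

Lemma am_0 : am 0 k = 0.
Proof. rewrite <- (ellF_0 k) at 1; apply am_ellF. Qed.

Lemma ellF_PI : ellF k PI = 2 * ellK k.
Proof.
  assert (Hd : forall z, is_derive (fun z => ellF k (PI - z) + ellF k z) z 0).
  { intro z; replace 0 with (-1 * ellF_integrand k (PI - z) + ellF_integrand k z)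
      by (unfold ellF_integrand; rewrite sin_PI_x; ring).
    apply (is_derive_plus (fun z => ellF k (PI - z)) (ellF k)); [|apply is_derive_ellF].
    apply (is_derive_comp (ellF k) (fun z => PI - z)); [apply is_derive_ellF|].
    auto_derive; auto; ring. }
  destruct (MVT_R _ _ 0 (PI / 2) Hd) as [c [_ Hc]].
  unfold ellK; replace (PI - PI / 2) with (PI / 2) in Hc by field.
  rewrite Rminus_0_r, ellF_0 in Hc; lra.
Qed.

(* The integrand is PI-periodic. *)
Lemma ellF_add_PI (x : R) : ellF k (x + PI) = ellF k x + 2 * ellK k.
Proof.
  assert (Hd : forall z, is_derive (fun z => ellF k (z + PI) - ellF k z) z 0).
  { intro z; replace 0 with (1 * ellF_integrand k (z + PI) - ellF_integrand k z)
      by (unfold ellF_integrand; rewrite neg_sin;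
          replace ((- sin z) ^ 2) with (sin z ^ 2) by ring; ring).
    apply (is_derive_minus (fun z => ellF k (z + PI)) (ellF k)); [|apply is_derive_ellF].
    apply (is_derive_comp (ellF k) (fun z => z + PI)); [apply is_derive_ellF|].
    auto_derive; auto; ring. }
  destruct (MVT_R _ _ 0 x Hd) as [c [_ Hc]].
  rewrite Rplus_0_l, ellF_0, ellF_PI in Hc; lra.
Qed.

Lemma am_add_2K (t : R) : am (t + 2 * ellK k) k = am t k + PI.
Proof. apply ellF_inj; rewrite ellF_am, ellF_add_PI, ellF_am; reflexivity. Qed.

Lemma am_sub_2K (t : R) : am (t - 2 * ellK k) k = am t k - PI.
Proof.
  apply ellF_inj; rewrite ellF_am.
  pose proof (ellF_add_PI (am t k - PI)) as H.
  replace (am t k - PI + PI) with (am t k) in H by ring; rewrite ellF_am in H; lra.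
Qed.

Lemma is_derive_ellF_gd (s : R) :
  is_derive (fun s => ellF k (gd s)) s (/ sqrt (1 + (1 - k ^ 2) * sinh s ^ 2)).
Proof.
  replace (/ sqrt (1 + (1 - k ^ 2) * sinh s ^ 2)) with (sech s * ellF_integrand k (gd s)).
  { apply (is_derive_comp (ellF k) gd); [apply is_derive_ellF | apply is_derive_gd]. }
  unfold ellF_integrand, sech; rewrite sin_gd.
  pose proof (cosh_ge_1 s); pose proof (cosh_sq s) as Hcosh; pose proof (pow2_ge_0 (sinh s)).
  assert (HD : 0 < 1 + (1 - k ^ 2) * sinh s ^ 2) by nra.
  replace (1 - k ^ 2 * tanh s ^ 2) with ((1 + (1 - k ^ 2) * sinh s ^ 2) / cosh s ^ 2).
  2: { unfold tanh; field_simplify_eq; [rewrite Hcosh; ring | lra]. }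
  rewrite sqrt_div, sqrt_pow2; [| lra | lra | apply pow2_gt_0; lra].
  assert (0 < sqrt (1 + (1 - k ^ 2) * sinh s ^ 2)) by (apply sqrt_lt_R0; lra).
  field; lra.
Qed.

Lemma ellF_gd_sub_le (s : R) : Rabs (ellF k (gd s) - s) <= ellF_gd_err k s.
Proof.
  assert (Hd : forall z, is_derive (fun s => ellF k (gd s) - s) z
                 (/ sqrt (1 + (1 - k ^ 2) * sinh z ^ 2) - 1)).
  { intro z; apply (is_derive_minus (fun s => ellF k (gd s)) (fun s => s));
      [apply is_derive_ellF_gd | auto_derive; auto]. }
  destruct (MVT_R _ _ 0 s Hd) as [c [Hc Heq]].
  unfold gd in Heq; rewrite sinh_0, atan_0, ellF_0, !Rminus_0_r in Heq.
  fold (gd s) in Heq; rewrite Heq, Rabs_mult, Rmult_comm; unfold ellF_gd_err.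
  apply Rmult_le_compat_l; [apply Rabs_pos|].
  assert (Hcs : Rabs c <= Rabs s)
    by (unfold Rmin, Rmax in Hc; destruct Rle_dec; unfold Rabs; repeat destruct Rcase_abs; lra).
  assert (Hsinh : sinh c ^ 2 <= exp (Rabs s) ^ 2).
  { rewrite <- pow2_abs; apply pow_incr; split; [apply Rabs_pos|].
    apply Rle_trans with (exp (Rabs c)); [apply Rabs_sinh_le_exp | apply exp_le_exp, Hcs]. }
  eapply Rle_trans; [apply Rabs_inv_sqrt_1_plus_sub_1|].
  - pose proof (pow2_ge_0 (sinh c)); nra.
  - apply Rmult_le_compat_l; lra.
Qed.

Lemma am_sub_gd_le (s : R) : Rabs (am s k - gd s) <= ellF_gd_err k s.
Proof.
  eapply Rle_trans; [apply Rabs_sub_le_ellF|].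
  rewrite ellF_am, Rabs_minus_sym; apply ellF_gd_sub_le.
Qed.

Lemma ellF_gd_err_le (s S : R) : Rabs s <= S -> ellF_gd_err k s <= S * ((1 - k ^ 2) * exp S ^ 2).
Proof.
  intros Hs; unfold ellF_gd_err; pose proof (Rabs_pos s).
  assert (exp (Rabs s) ^ 2 <= exp S ^ 2)
    by (apply pow_incr; split; [apply Rlt_le, exp_pos | apply exp_le_exp, Hs]).
  apply Rmult_le_compat; try lra.
  - apply Rmult_le_pos; [lra | apply pow2_ge_0].
  - apply Rmult_le_compat_l; lra.
Qed.

Lemma ellK_ge (T : R) : T - ellF_gd_err k T <= ellK k.
Proof.
  pose proof (ellF_gd_sub_le T) as H; pose proof (atan_bound (sinh T)).
  pose proof (ellF_sub_ge (gd T) (PI / 2) ltac:(unfold gd; lra)).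
  unfold ellK; apply Rabs_le_between in H; unfold gd in *; lra.
Qed.

Lemma ellK_sub_PI2_bounds : 0 <= ellK k - PI / 2 <= k ^ 2 / (1 - k ^ 2) * (PI / 2).
Proof.
  assert (Hd : forall z, is_derive (fun z => ellF k z - z) z (ellF_integrand k z - 1))
    by (intro z; apply (is_derive_minus (ellF k) (fun z => z));
        [apply is_derive_ellF | auto_derive; auto]).
  destruct (MVT_R _ _ 0 (PI / 2) Hd) as [c [_ Hc]].
  rewrite ellF_0, !Rminus_0_r in Hc; unfold ellK; rewrite Hc.
  pose proof (one_le_ellF_integrand c); pose proof (ellF_integrand_le c).
  pose proof PI_RGT_0; pose proof (pow2_ge_0 k).
  assert (Hsq : 1 - k ^ 2 <= sqrt (1 - k ^ 2)).
  { pose proof (sqrt_sqrt (1 - k ^ 2) ltac:(lra)) as Hr2.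
    pose proof (sqrt_le_1_alt (1 - k ^ 2) 1 ltac:(lra)) as Hr1; rewrite sqrt_1 in Hr1.
    pose proof (sqrt_pos (1 - k ^ 2)); nra. }
  assert (/ sqrt (1 - k ^ 2) <= / (1 - k ^ 2)) by (apply Rinv_le_contravar; lra).
  replace (k ^ 2 / (1 - k ^ 2)) with (/ (1 - k ^ 2) - 1) by (field; lra).
  split; [apply Rmult_le_pos | apply Rmult_le_compat_r]; lra.
Qed.

Lemma is_derive_cot_div (m x : R) : 0 < m -> 0 < sin x ->
  is_derive (fun z => cos z / (m * sin z)) x (- / (m * sin x ^ 2)).
Proof.
  intros Hm Hs; auto_derive; [apply Rgt_not_eq, Rmult_gt_0_compat; auto|].
  pose proof (sin2_cos2 x); unfold Rsqr in *; field_simplify_eq; [nra | lra].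
Qed.

Section ComplementaryModulus.

Variable m : R.
Hypothesis hm : 0 < m.
Hypothesis hmk : m ^ 2 = 1 - k ^ 2.

Lemma is_derive_ellF_atan_cot (x : R) : 0 < sin x ->
  is_derive (fun z => ellF k (atan (cos z / (m * sin z)))) x (- ellF_integrand k x).
Proof.
  intros Hs.
  set (u := cos x / (m * sin x)).
  replace (- ellF_integrand k x)
    with ((/ (1 + u ^ 2) * - / (m * sin x ^ 2)) * ellF_integrand k (atan u)).
  { apply (is_derive_comp (ellF k)); [apply is_derive_ellF|].
    apply is_derive_Reals, (derivable_pt_lim_comp (fun z => cos z / (m * sin z)) atan).
    - apply is_derive_Reals, is_derive_cot_div; assumption.
    - apply derivable_pt_lim_atan. }
  assert (Hsc : sin x ^ 2 + cos x ^ 2 = 1) by (pose proof (sin2_cos2 x); unfold Rsqr in *; lra).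
  assert (Hmu : m * sin x * u = cos x) by (unfold u; field; lra).
  set (Q := sqrt (1 + u²)).
  assert (HQ : Q ^ 2 = 1 + u ^ 2) by (unfold Q; rewrite pow2_sqrt; unfold Rsqr; [ring | nra]).
  assert (HQ0 : 0 < Q) by (unfold Q; apply sqrt_lt_R0; unfold Rsqr; nra).
  (* both radicands are perfect squares, since [m u = cot x] *)
  assert (Hx : 1 - k ^ 2 * sin x ^ 2 = (m * sin x * Q) ^ 2).
  { replace ((m * sin x * Q) ^ 2) with (m ^ 2 * sin x ^ 2 + (m * sin x * u) ^ 2)
      by (rewrite !Rpow_mult_distr, HQ; ring).
    rewrite Hmu, hmk; lra. }
  assert (Hatan : 1 - k ^ 2 * sin (atan u) ^ 2 = (/ (sin x * Q)) ^ 2).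
  { assert (Hprod : sin x ^ 2 * (Q ^ 2 - k ^ 2 * u ^ 2) = 1).
    { replace (sin x ^ 2 * (Q ^ 2 - k ^ 2 * u ^ 2)) with (sin x ^ 2 + (m * sin x * u) ^ 2)
        by (rewrite HQ, !Rpow_mult_distr, hmk; ring).
      rewrite Hmu; lra. }
    rewrite sin_atan; fold Q; field_simplify_eq; lra. }
  unfold ellF_integrand; rewrite Hx, Hatan, !sqrt_pow2.
  - rewrite <- HQ; field; lra.
  - apply Rmult_le_pos; [nra | lra].
  - apply Rlt_le, Rinv_0_lt_compat; nra.
Qed.

Lemma ellF_complement (x : R) : 0 < x < PI ->
  ellF k (atan (cos x / (m * sin x))) + ellF k x = ellK k.
Proof.
  intros Hx.
  set (C := fun z => ellF k (atan (cos z / (m * sin z))) + ellF k z).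
  assert (Hd : forall z, 0 < z < PI -> is_derive C z 0).
  { intros z Hz; replace 0 with (plus (- ellF_integrand k z) (ellF_integrand k z))
      by (unfold plus; simpl; ring).
    apply (is_derive_plus (fun z => ellF k (atan (cos z / (m * sin z)))) (ellF k));
      [apply is_derive_ellF_atan_cot, sin_gt_0 | apply is_derive_ellF]; lra. }
  assert (Hin : forall z, Rmin x (PI / 2) <= z <= Rmax x (PI / 2) -> 0 < z < PI)
    by (intros z; unfold Rmin, Rmax; destruct Rle_dec; pose proof PI_RGT_0; lra).
  destruct (MVT_gen C x (PI / 2) (fun _ => 0)) as [c [_ Hc]].
  - intros z Hz; apply Hd, Hin; lra.
  - intros z Hz; apply continuity_pt_filterlim, (ex_derive_continuous (V := R_NormedModule)).
    eexists; apply Hd, Hin, Hz.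
  - unfold C in Hc; rewrite cos_PI2, sin_PI2, Rdiv_0_l, atan_0, ellF_0 in Hc.
    unfold ellK, C; lra.
Qed.

End ComplementaryModulus.

End EllipticF.

Section DegenerateModulus.

Context {T : Type} (F : (T -> Prop) -> Prop) {FF : Filter F}.
Variable k : T -> R.
Hypothesis hk : F (fun x => k x ^ 2 < 1).
Hypothesis hk1 : filterlim (fun x => 1 - k x ^ 2) F (locally 0).

Lemma ellF_gd_err_small (S eps : R) : 0 < eps ->
  F (fun x => forall s, Rabs s <= S -> ellF_gd_err (k x) s < eps).
Proof.
  intros He; set (C := Rabs S * exp S ^ 2 + 1).
  assert (HC : 0 < C) by (unfold C; pose proof (Rabs_pos S); pose proof (pow2_ge_0 (exp S)); nra).
  generalize (filter_and _ _ hk (filterlim_locally_Rabs F _ 0 hk1 (eps / C)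
                                   ltac:(apply Rdiv_lt_0_compat; lra))).
  apply filter_imp; intros x [Hkx Hx] s Hs.
  rewrite Rminus_0_r, Rabs_pos_eq in Hx by lra.
  apply (Rmult_lt_compat_l C) in Hx; [|lra].
  replace (C * (eps / C)) with eps in Hx by (field; lra).
  eapply Rle_lt_trans; [apply (ellF_gd_err_le _ Hkx _ _ Hs)|].
  assert (0 <= S) by (pose proof (Rabs_pos s); lra).
  unfold C in Hx; rewrite Rabs_pos_eq in Hx by lra.
  pose proof (pow2_ge_0 (exp S)); nra.
Qed.

Lemma ellK_cvg_p_infty : filterlim (fun x => ellK (k x)) F (Rbar_locally p_infty).
Proof.
  intros P [M HM]; set (S := Rabs M + 2); unfold filtermap.
  generalize (filter_and _ _ hk (ellF_gd_err_small S 1 Rlt_0_1)).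
  apply filter_imp; intros x [Hkx Herr]; apply HM.
  assert (HS : Rabs S <= S) by (apply Req_le, Rabs_pos_eq; unfold S; pose proof (Rabs_pos M); lra).
  pose proof (ellK_ge (k x) Hkx S); pose proof (Herr S HS).
  pose proof (Rle_abs M); unfold S in *; lra.
Qed.

Lemma ellK_compl_cvg_PI2 :
  filterlim (fun x => ellK (sqrt (1 - k x ^ 2))) F (locally (PI / 2)).
Proof.
  apply (filterlim_of_dominated F _ (fun x => 1 - k x ^ 2) _ PI); [|exact hk1].
  generalize (filter_and _ _ hk (filterlim_locally_Rabs F _ 0 hk1 (1 / 2) ltac:(lra))).
  apply filter_imp; intros x [Hkx Hx]; rewrite Rminus_0_r in Hx.
  apply Rabs_lt_between in Hx.
  set (m := sqrt (1 - k x ^ 2)).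
  assert (Hm : m ^ 2 = 1 - k x ^ 2) by (apply pow2_sqrt; lra).
  destruct (ellK_sub_PI2_bounds m ltac:(lra)) as [Hlow Hup].
  rewrite Hm in Hup; replace (1 - (1 - k x ^ 2)) with (k x ^ 2) in Hup by ring.
  assert ((1 - k x ^ 2) / k x ^ 2 <= 2 * (1 - k x ^ 2))
    by (apply Rle_div_l; [lra | nra]).
  rewrite !Rabs_pos_eq by lra; pose proof PI_RGT_0; nra.
Qed.

Lemma ellF_gd_cvg (s : T -> R) (s0 : R) :
  filterlim s F (locally s0) -> filterlim (fun x => ellF (k x) (gd (s x))) F (locally s0).
Proof.
  intros Hs; apply filterlim_locally; intros eps; pose proof (cond_pos eps).
  assert (Hsmall := ellF_gd_err_small (Rabs s0 + 1) (eps / 2) ltac:(lra)).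
  assert (Hnear := filterlim_locally_Rabs F s s0 Hs (Rmin 1 (eps / 2))
                   ltac:(apply Rmin_glb_lt; lra)).
  generalize (filter_and _ _ (filter_and _ _ hk Hsmall) Hnear).
  apply filter_imp; intros x [[Hkx Herr] Hsx]; change (Rabs (ellF (k x) (gd (s x)) - s0) < eps).
  pose proof (Rmin_l 1 (eps / 2)); pose proof (Rmin_r 1 (eps / 2)).
  assert (HS : Rabs (s x) <= Rabs s0 + 1) by (pose proof (Rabs_triang_inv (s x) s0); lra).
  pose proof (ellF_gd_sub_le (k x) Hkx (s x)); pose proof (Herr (s x) HS).
  pose proof (Rabs_triang (ellF (k x) (gd (s x)) - s x) (s x - s0)).
  replace (ellF (k x) (gd (s x)) - s x + (s x - s0)) with (ellF (k x) (gd (s x)) - s0) in * by ring.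
  lra.
Qed.

Lemma am_cvg_gd_unif (s : T -> R) (s0 : R) :
  filterlim s F (locally s0) -> forall M eps, 0 < eps ->
  F (fun x => forall t, Rabs t <= M -> Rabs (am (t + s x) (k x) - gd (t + s0)) < eps).
Proof.
  intros Hs M eps He.
  assert (Hsmall := ellF_gd_err_small (M + Rabs s0 + 1) (eps / 2) ltac:(lra)).
  assert (Hnear := filterlim_locally_Rabs F s s0 Hs (Rmin 1 (eps / 2))
                   ltac:(apply Rmin_glb_lt; lra)).
  generalize (filter_and _ _ (filter_and _ _ hk Hsmall) Hnear).
  apply filter_imp; intros x [[Hkx Herr] Hsx] t Ht.
  pose proof (Rmin_l 1 (eps / 2)); pose proof (Rmin_r 1 (eps / 2)).
  assert (HS : Rabs (t + s x) <= M + Rabs s0 + 1).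
  { replace (t + s x) with (t + (s x - s0) + s0) by ring.
    pose proof (Rabs_triang (t + (s x - s0)) s0); pose proof (Rabs_triang t (s x - s0)); lra. }
  pose proof (am_sub_gd_le (k x) Hkx (t + s x)); pose proof (Herr _ HS).
  pose proof (gd_lipschitz (t + s0) (t + s x)).
  replace (t + s x - (t + s0)) with (s x - s0) in * by ring.
  pose proof (Rabs_triang (am (t + s x) (k x) - gd (t + s x)) (gd (t + s x) - gd (t + s0))).
  replace (am (t + s x) (k x) - gd (t + s x) + (gd (t + s x) - gd (t + s0)))
    with (am (t + s x) (k x) - gd (t + s0)) in * by ring.
  lra.
Qed.

End DegenerateModulus.

Lemma unif_compact_eventually_ext (c : R) (f f' : R -> R -> R * R) (g g' : R -> R * R) :
  at_left c (fun l => forall t, f l t = f' l t) -> (forall t, g t = g' t) ->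
  unif_compact c f' g' -> unif_compact c f g.
Proof.
  intros Hf Hg H M eps He; generalize (filter_and _ _ Hf (H M eps He)).
  apply filter_imp; intros l [E Hl] t Ht; rewrite E, Hg; exact (Hl t Ht).
Qed.

Lemma unif_compact_ellipse (c p q : R) (A : R -> R -> R) (B : R -> R) :
  (forall M eps, 0 < eps ->
     at_left c (fun l => forall t, Rabs t <= M -> Rabs (A l t - B t) < eps)) ->
  unif_compact c (fun l t => (p * sin (A l t), q * cos (A l t)))
                 (fun t => (p * sin (B t), q * cos (B t))).
Proof.
  intros HA M eps He; set (D := Rabs p + Rabs q + 1).
  assert (HD : 0 < D) by (unfold D; pose proof (Rabs_pos p); pose proof (Rabs_pos q); lra).
  generalize (HA M (eps / D) ltac:(apply Rdiv_lt_0_compat; lra)).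
  apply filter_imp; intros l Hl t Ht; specialize (Hl t Ht); simpl.
  apply (Rmult_lt_compat_l D) in Hl; [|lra].
  replace (D * (eps / D)) with eps in Hl by (field; lra).
  rewrite <- !Rmult_minus_distr_l, !Rabs_mult.
  pose proof (sin_lipschitz (B t) (A l t)); pose proof (cos_lipschitz (B t) (A l t)).
  pose proof (Rabs_pos p); pose proof (Rabs_pos q); pose proof (Rabs_pos (A l t - B t)).
  unfold D in Hl; split; nra.
Qed.

Lemma not_unif_R_of_gap (c e : R) (f : R -> R -> R * R) (g : R -> R * R) : 0 < e ->
  at_left c (fun l => exists t, e <= Rabs (snd (f l t) - snd (g t))) -> ~ unif_R c f g.
Proof.
  intros He Hgap HU.
  destruct (@filter_ex _ _ (at_left_proper_filter c) _ (filter_and _ _ Hgap (HU e He)))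
    as [l [[t Ht] Hall]].
  destruct (Hall t); lra.
Qed.

Lemma continuous_arcsinh (x : R) : continuous arcsinh x.
Proof.
  apply (ex_derive_continuous (V := R_NormedModule)); eexists.
  apply is_derive_Reals, derivable_pt_lim_arcsinh.
Qed.

Section LambdaFamily.

Variables a b : R.
Hypothesis hb : 0 < b.
Hypothesis hba : b < a.

Lemma lam_bounds_eventually : at_left b (fun l => 0 < l < b).
Proof.
  exists (mkposreal b hb); intros y Hy Hyb.
  change (Rabs (y - b) < b) in Hy; apply Rabs_lt_between in Hy; lra.
Qed.

Lemma one_sub_kmod_sq (l : R) : 0 < l < b ->
  1 - kmod a b l ^ 2 = (b ^ 2 - l ^ 2) / (a ^ 2 - l ^ 2).
Proof.
  intros Hl; unfold kmod; rewrite pow2_sqrt; [field; nra|].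
  apply Rmult_le_pos; [nra | apply Rlt_le, Rinv_0_lt_compat; nra].
Qed.

Lemma kmod_sq_lt_1 (l : R) : 0 < l < b -> kmod a b l ^ 2 < 1.
Proof.
  intros Hl; pose proof (one_sub_kmod_sq l Hl).
  assert (0 < (b ^ 2 - l ^ 2) / (a ^ 2 - l ^ 2)) by (apply Rdiv_lt_0_compat; nra).
  lra.
Qed.

Lemma kmod_sq_lt_1_eventually : at_left b (fun l => kmod a b l ^ 2 < 1).
Proof. exact (filter_imp _ _ kmod_sq_lt_1 lam_bounds_eventually). Qed.

Lemma one_sub_kmod_sq_cvg : filterlim (fun l => 1 - kmod a b l ^ 2) (at_left b) (locally 0).
Proof.
  apply (filterlim_ext_loc (fun l => (b ^ 2 - l ^ 2) / (a ^ 2 - l ^ 2))).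
  { apply (filter_imp _ _ (fun l Hl => eq_sym (one_sub_kmod_sq l Hl)) lam_bounds_eventually). }
  replace (locally 0) with (locally ((b ^ 2 - b ^ 2) / (a ^ 2 - b ^ 2)))
    by (f_equal; field; nra).
  apply (continuous_at_left (fun l => (b ^ 2 - l ^ 2) / (a ^ 2 - l ^ 2)) b).
  apply (ex_derive_continuous (V := R_NormedModule)); auto_derive; nra.
Qed.

Lemma deltal_eq (l phi : R) : 0 < l < b -> 0 < phi < PI / 2 -> sin phi = l / b ->
  deltal a b l = 2 * ellF (kmod a b l) phi.
Proof.
  intros Hl Hphi Hsin; pose proof (kmod_sq_lt_1 l Hl) as Hk.
  set (k := kmod a b l) in *.
  unfold deltal; fold k.
  set (P := fun d => 0 < d < 2 * Kl a b l /\ sn (d / 2) k = l / b).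
  assert (HK : Kl a b l = ellF k (PI / 2)) by reflexivity.
  assert (Hex : exists d, P d).
  { exists (2 * ellF k phi); unfold P, sn; rewrite HK; split.
    - pose proof (ellF_sub_ge k Hk 0 phi ltac:(lra));
        pose proof (ellF_sub_ge k Hk phi (PI / 2) ltac:(lra)).
      rewrite ellF_0 in *; lra.
    - replace (2 * ellF k phi / 2) with (ellF k phi) by field; rewrite am_ellF; auto. }
  destruct (epsilon_spec (inhabits 0) P Hex) as [[Hd1 Hd2] Hsn].
  set (d := epsilon (inhabits 0) P) in *.
  rewrite HK in Hd2; unfold sn in Hsn.
  (* F(., k) is increasing, so am (d / 2) lies in (0, PI / 2) like phi *)
  assert (He : ellF k (am (d / 2) k) = d / 2) by (apply ellF_am; auto).
  assert (Hp1 : 0 < am (d / 2) k).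
  { destruct (Rlt_le_dec 0 (am (d / 2) k)) as [H | H]; auto.
    pose proof (ellF_sub_ge k Hk _ 0 H); rewrite ellF_0 in *; lra. }
  assert (Hp2 : am (d / 2) k < PI / 2).
  { destruct (Rlt_le_dec (am (d / 2) k) (PI / 2)) as [H | H]; auto.
    pose proof (ellF_sub_ge k Hk (PI / 2) _ H); lra. }
  assert (am (d / 2) k = phi) as <- by (apply sin_inj; lra).
  rewrite He; field.
Qed.

Lemma zetal_eq (l : R) : 0 < l < b ->
  zetal a b l = 2 * ellF (kmod a b l) (gd (arcsinh (sqrt (a ^ 2 - l ^ 2) / l))).
Proof.
  intros Hl; pose proof (kmod_sq_lt_1 l Hl) as Hk; pose proof (one_sub_kmod_sq l Hl) as Hk1.
  set (k := kmod a b l) in *.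
  set (sb := sqrt (b ^ 2 - l ^ 2)); set (sa := sqrt (a ^ 2 - l ^ 2)).
  assert (Hsb : 0 < sb) by (apply sqrt_lt_R0; nra).
  assert (Hsb2 : sb ^ 2 = b ^ 2 - l ^ 2) by (apply pow2_sqrt; nra).
  assert (Hsa : 0 < sa) by (apply sqrt_lt_R0; nra).
  set (m := sqrt (1 - k ^ 2)).
  assert (Hm : 0 < m) by (apply sqrt_lt_R0; lra).
  assert (Hm2 : m ^ 2 = 1 - k ^ 2) by (apply pow2_sqrt; lra).
  assert (Hmsa : m = sb / sa) by (unfold m; rewrite Hk1; apply sqrt_div; nra).
  set (phi := atan (l / sb)).
  assert (Hq : sqrt (1 + (l / sb)²) = b / sb).
  { rewrite <- (sqrt_pow2 (b / sb)) by (apply Rlt_le, Rdiv_lt_0_compat; lra).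
    f_equal; unfold Rsqr; field_simplify_eq; [rewrite Hsb2; ring | lra]. }
  assert (Hsin : sin phi = l / b) by (unfold phi; rewrite sin_atan, Hq; field; lra).
  assert (Hcos : cos phi = sb / b) by (unfold phi; rewrite cos_atan, Hq; field; lra).
  assert (Hphi : 0 < phi < PI / 2).
  { unfold phi; rewrite <- atan_0; pose proof (atan_bound (l / sb)); split; [|lra].
    apply atan_increasing, Rdiv_lt_0_compat; lra. }
  pose proof (ellF_complement k Hk m Hm Hm2 phi ltac:(lra)) as Hcompl.
  replace (cos phi / (m * sin phi)) with (sa / l) in Hcompl
    by (rewrite Hcos, Hsin, Hmsa; field; lra).
  unfold zetal, Kl; rewrite (deltal_eq l phi Hl Hphi Hsin); fold k.
  unfold gd; rewrite sinh_arcsinh; lra.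
Qed.

Lemma zeta_arg_cvg :
  filterlim (fun l => arcsinh (sqrt (a ^ 2 - l ^ 2) / l)) (at_left b)
            (locally (arcsinh (sqrt (a ^ 2 - b ^ 2) / b))).
Proof.
  apply (continuous_at_left (fun l => arcsinh (sqrt (a ^ 2 - l ^ 2) / l))).
  apply (continuous_comp (fun l => sqrt (a ^ 2 - l ^ 2) / l) arcsinh); [|apply continuous_arcsinh].
  apply (ex_derive_continuous (V := R_NormedModule)); auto_derive; nra.
Qed.

Lemma kmod_cvg_1 : filterlim (kmod a b) (at_left b) (locally 1).
Proof.
  apply (filterlim_of_dominated _ _ (fun l => 1 - kmod a b l ^ 2) _ 1);
    [|exact one_sub_kmod_sq_cvg].
  apply (filter_imp (fun l => 0 < l < b)); [intros l Hl | exact lam_bounds_eventually].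
  pose proof (kmod_sq_lt_1 l Hl); pose proof (sqrt_pos ((a ^ 2 - b ^ 2) / (a ^ 2 - l ^ 2))).
  fold (kmod a b l) in *.
  assert (kmod a b l < 1) by nra.
  rewrite Rabs_left, Rabs_pos_eq by lra; nra.
Qed.

Variable h : R.
Hypothesis hsinh : sinh (h / 2) = sqrt (a ^ 2 - b ^ 2) / b.

Lemma zetal_cvg : filterlim (zetal a b) (at_left b) (locally h).
Proof.
  apply (filterlim_ext_loc
           (fun l => 2 * ellF (kmod a b l) (gd (arcsinh (sqrt (a ^ 2 - l ^ 2) / l))))).
  { apply (filter_imp _ _ (fun l Hl => eq_sym (zetal_eq l Hl)) lam_bounds_eventually). }
  replace (locally h) with (locally (2 * (h / 2))) by (f_equal; field).
  apply (filterlim_comp _ _ _ _ (fun z => 2 * z) _ (locally (h / 2)));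
    [|exact (filterlim_scal_r (V := R_NormedModule) 2 (h / 2))].
  apply (ellF_gd_cvg _ _ kmod_sq_lt_1_eventually one_sub_kmod_sq_cvg).
  rewrite <- (arcsinh_sinh (h / 2)), hsinh; apply zeta_arg_cvg.
Qed.

Lemma qt_unif_compact :
  unif_compact b (fun l t => (qt1 a b l t, qt2 a b l t)) (fun t => (qh1 a b t, qh2 a b t)).
Proof.
  apply (unif_compact_eventually_ext b _
           (fun l t => (a * sin (am (t + 0) (kmod a b l)), b * cos (am (t + 0) (kmod a b l)))) _
           (fun t => (a * sin (gd (t + 0)), b * cos (gd (t + 0))))).
  - apply filter_forall; intros l t; unfold qt1, qt2, sn, cn; rewrite Rplus_0_r; reflexivity.
  - intros t; unfold qh1, qh2; rewrite Rplus_0_r, sin_gd, cos_gd; reflexivity.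
  - apply unif_compact_ellipse.
    exact (am_cvg_gd_unif _ _ kmod_sq_lt_1_eventually one_sub_kmod_sq_cvg _ _ (filterlim_const 0)).
Qed.

Lemma qt_add_delta_unif_compact :
  unif_compact b (fun l t => (qt1 a b l (t + deltal a b l), qt2 a b l (t + deltal a b l)))
                 (fun t => (- qh1 a b (t - h), - qh2 a b (t - h))).
Proof.
  apply (unif_compact_eventually_ext b _
           (fun l t => (- a * sin (am (t + - zetal a b l) (kmod a b l)),
                        - b * cos (am (t + - zetal a b l) (kmod a b l)))) _
           (fun t => (- a * sin (gd (t + - h)), - b * cos (gd (t + - h))))).
  - apply (filter_imp (fun l => 0 < l < b)); [intros l Hl t | exact lam_bounds_eventually].
    unfold qt1, qt2, sn, cn.
    replace (t + deltal a b l) with (t + - zetal a b l + 2 * ellK (kmod a b l))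
      by (unfold zetal, Kl; ring).
    rewrite am_add_2K, neg_sin, neg_cos by (apply kmod_sq_lt_1; exact Hl).
    f_equal; ring.
  - intros t; unfold qh1, qh2; rewrite <- sin_gd, <- cos_gd.
    replace (t - h) with (t + - h) by ring; f_equal; ring.
  - apply unif_compact_ellipse.
    exact (am_cvg_gd_unif _ _ kmod_sq_lt_1_eventually one_sub_kmod_sq_cvg _ _
             (filterlim_comp _ _ _ _ Ropp _ _ _ zetal_cvg (filterlim_opp (V := R_NormedModule) h))).
Qed.

Lemma qt_sub_delta_unif_compact :
  unif_compact b (fun l t => (qt1 a b l (t - deltal a b l), qt2 a b l (t - deltal a b l)))
                 (fun t => (- qh1 a b (t + h), - qh2 a b (t + h))).
Proof.
  apply (unif_compact_eventually_ext b _
           (fun l t => (- a * sin (am (t + zetal a b l) (kmod a b l)),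
                        - b * cos (am (t + zetal a b l) (kmod a b l)))) _
           (fun t => (- a * sin (gd (t + h)), - b * cos (gd (t + h))))).
  - apply (filter_imp (fun l => 0 < l < b)); [intros l Hl t | exact lam_bounds_eventually].
    unfold qt1, qt2, sn, cn.
    replace (t - deltal a b l) with (t + zetal a b l - 2 * ellK (kmod a b l))
      by (unfold zetal, Kl; ring).
    rewrite am_sub_2K by (apply kmod_sq_lt_1; exact Hl).
    rewrite sin_minus, cos_minus, sin_PI, cos_PI; f_equal; ring.
  - intros t; unfold qh1, qh2; rewrite <- sin_gd, <- cos_gd; f_equal; ring.
  - apply unif_compact_ellipse.
    exact (am_cvg_gd_unif _ _ kmod_sq_lt_1_eventually one_sub_kmod_sq_cvg _ _ zetal_cvg).
Qed.

Lemma qt_not_unif_R :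
  ~ unif_R b (fun l t => (qt1 a b l t, qt2 a b l t)) (fun t => (qh1 a b t, qh2 a b t)).
Proof.
  apply (not_unif_R_of_gap b b _ _ hb).
  apply (filter_imp (fun l => 0 < l < b)); [intros l Hl | exact lam_bounds_eventually].
  pose proof (kmod_sq_lt_1 l Hl) as Hk.
  exists (2 * ellK (kmod a b l)); simpl; unfold qt2, qh2, cn.
  rewrite <- (Rplus_0_l (2 * ellK (kmod a b l))) at 1.
  rewrite am_add_2K, am_0, Rplus_0_l, cos_PI by exact Hk.
  pose proof (sech_pos (2 * ellK (kmod a b l))); rewrite Rabs_left by nra; nra.
Qed.

Lemma qt_add_delta_not_unif_R :
  ~ unif_R b (fun l t => (qt1 a b l (t + deltal a b l), qt2 a b l (t + deltal a b l)))
             (fun t => (- qh1 a b (t - h), - qh2 a b (t - h))).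
Proof.
  apply (not_unif_R_of_gap b b _ _ hb).
  apply (filter_imp (fun l => 0 < l < b)); [intros l Hl | exact lam_bounds_eventually].
  exists (- deltal a b l); simpl; unfold qt2, qh2, cn.
  rewrite Rplus_opp_l, am_0, cos_0 by (apply kmod_sq_lt_1; exact Hl).
  pose proof (sech_pos (- deltal a b l - h)); rewrite Rabs_pos_eq by nra; nra.
Qed.

Lemma qt_sub_delta_not_unif_R :
  ~ unif_R b (fun l t => (qt1 a b l (t - deltal a b l), qt2 a b l (t - deltal a b l)))
             (fun t => (- qh1 a b (t + h), - qh2 a b (t + h))).
Proof.
  apply (not_unif_R_of_gap b b _ _ hb).
  apply (filter_imp (fun l => 0 < l < b)); [intros l Hl | exact lam_bounds_eventually].
  exists (deltal a b l); simpl; unfold qt2, qh2, cn.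
  rewrite Rminus_diag, am_0, cos_0 by (apply kmod_sq_lt_1; exact Hl).
  pose proof (sech_pos (deltal a b l + h)); rewrite Rabs_pos_eq by nra; nra.
Qed.

End LambdaFamily.

Theorem lemma3 (a b h : R) (hb : 0 < b) (hba : b < a)
  (hh : 0 < h) (hsinh : sinh (h / 2) = sqrt (a ^ 2 - b ^ 2) / b) :
  filterlim (kmod a b) (at_left b) (locally 1) /\
  filterlim (Kl a b) (at_left b) (Rbar_locally p_infty) /\
  filterlim (Kpl a b) (at_left b) (locally (PI / 2)) /\
  filterlim (zetal a b) (at_left b) (locally h) /\
  (* q~0(t) -> q^0(t) *)
  unif_compact b (fun lam t => (qt1 a b lam t, qt2 a b lam t))
                 (fun t => (qh1 a b t, qh2 a b t)) /\
  ~ unif_R b (fun lam t => (qt1 a b lam t, qt2 a b lam t))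
             (fun t => (qh1 a b t, qh2 a b t)) /\
  (* q~0(t + delta) -> - q^0(t - h) *)
  unif_compact b (fun lam t => (qt1 a b lam (t + deltal a b lam), qt2 a b lam (t + deltal a b lam)))
                 (fun t => (- qh1 a b (t - h), - qh2 a b (t - h))) /\
  ~ unif_R b (fun lam t => (qt1 a b lam (t + deltal a b lam), qt2 a b lam (t + deltal a b lam)))
             (fun t => (- qh1 a b (t - h), - qh2 a b (t - h))) /\
  (* q~0(t - delta) -> - q^0(t + h) *)
  unif_compact b (fun lam t => (qt1 a b lam (t - deltal a b lam), qt2 a b lam (t - deltal a b lam)))
                 (fun t => (- qh1 a b (t + h), - qh2 a b (t + h))) /\
  ~ unif_R b (fun lam t => (qt1 a b lam (t - deltal a b lam), qt2 a b lam (t - deltal a b lam)))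
             (fun t => (- qh1 a b (t + h), - qh2 a b (t + h))).
Proof.
  pose proof (kmod_sq_lt_1_eventually a b hb hba) as Hk.
  pose proof (one_sub_kmod_sq_cvg a b hb hba) as Hk1.
  repeat split.
  - exact (kmod_cvg_1 a b hb hba).
  - exact (ellK_cvg_p_infty _ _ Hk Hk1).
  - exact (ellK_compl_cvg_PI2 _ _ Hk Hk1).
  - exact (zetal_cvg a b hb hba h hsinh).
  - exact (qt_unif_compact a b hb hba).
  - exact (qt_not_unif_R a b hb hba).
  - exact (qt_add_delta_unif_compact a b hb hba h hsinh).
  - exact (qt_add_delta_not_unif_R a b hb hba h).
  - exact (qt_sub_delta_unif_compact a b hb hba h hsinh).
  - exact (qt_sub_delta_not_unif_R a b hb hba h).
Qed.
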